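(* Let $Z$ be a densely defined closed linear operator in a complex separable Hilbert space $\mathcal{H}$ such that $\operatorname{Dom}(Z)\subset\operatorname{Dom}(Z^* )$, and let $\lambda$ be a boundary eigenvalue of $Z$. Then $$\ker(\lambda-Z)\subset\ker(\overline{\lambda}-Z^* ),$$ i.e. if $f\in\operatorname{Dom}(Z)$ and $Zf=\lambda f$, then $Z^*f=\overline{\lambda}f$. If moreover $\operatorname{Dom}(Z)=\operatorname{Dom}(Z^* )$, then $\ker(\lambda-Z)=\ker(\overline{\lambda}-Z^* )$, i.e. $\lambda$ is a normal eigenvalue of $Z$.
   Context: The numerical range of an operator $Z$ in a Hilbert space $(\mathcal{H},\langle\cdot,\cdot\rangle)$ is $\operatorname{Num}(Z)=\{\langle Zf,f\rangle: f\in\operatorname{Dom}(Z),\ \|f\|=1\}$; it is a convex subset of $\mathbb{C}$. A boundary eigenvalue of $Z$ is an eigenvalue of $Z$ that lies in the topological boundary $\partial(\operatorname{Num}(Z))$ of the numerical range. An eigenvalue $\lambda$ of $Z$ is called normal if $\ker(\lambda-Z)=\ker(\overline{\lambda}-Z^* )$. *)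

From Stdlib Require Import Reals.
Open Scope R_scope.

Definition Cplx : Type := (R * R)%type.
Definition Re (z : Cplx) : R := fst z.
Definition Im (z : Cplx) : R := snd z.
Definition RtoC (x : R) : Cplx := (x, 0).
Definition C0 : Cplx := (0, 0).
Definition C1 : Cplx := (1, 0).
Definition Cadd (z w : Cplx) : Cplx := (Re z + Re w, Im z + Im w).
Definition Copp (z : Cplx) : Cplx := (- Re z, - Im z).
Definition Csub (z w : Cplx) : Cplx := Cadd z (Copp w).
Definition Cmul (z w : Cplx) : Cplx :=
  (Re z * Re w - Im z * Im w, Re z * Im w + Im z * Re w).
Definition Cconj (z : Cplx) : Cplx := (Re z, - Im z).
Definition Cmod (z : Cplx) : R := sqrt (Re z * Re z + Im z * Im z).

Definition boundaryC (S : Cplx -> Prop) (z : Cplx) : Prop :=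
  forall eps : R, 0 < eps ->
    (exists w, S w /\ Cmod (Csub w z) < eps) /\
    (exists w, ~ S w /\ Cmod (Csub w z) < eps).

Record ComplexHilbertSpace : Type := MkHilbert {
  hcar :> Type;
  hzero : hcar;
  hadd : hcar -> hcar -> hcar;
  hopp : hcar -> hcar;
  hscal : Cplx -> hcar -> hcar;
  hinner : hcar -> hcar -> Cplx;   (* linear in the first, antilinear in the second argument *)
  hadd_assoc : forall x y z, hadd x (hadd y z) = hadd (hadd x y) z;
  hadd_comm : forall x y, hadd x y = hadd y x;
  hadd_0 : forall x, hadd x hzero = x;
  hadd_opp : forall x, hadd x (hopp x) = hzero;
  hscal_1 : forall x, hscal C1 x = x;
  hscal_assoc : forall a b x, hscal a (hscal b x) = hscal (Cmul a b) x;
  hscal_addv : forall a x y, hscal a (hadd x y) = hadd (hscal a x) (hscal a y);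
  hscal_adds : forall a b x, hscal (Cadd a b) x = hadd (hscal a x) (hscal b x);
  hinner_add : forall x y z, hinner (hadd x y) z = Cadd (hinner x z) (hinner y z);
  hinner_scal : forall a x y, hinner (hscal a x) y = Cmul a (hinner x y);
  hinner_conj : forall x y, hinner y x = Cconj (hinner x y);
  hinner_pos : forall x, Im (hinner x x) = 0 /\ 0 <= Re (hinner x x);
  hinner_def : forall x, hinner x x = C0 -> x = hzero;
  hcomplete : forall u : nat -> hcar,
    (forall eps, 0 < eps -> exists N, forall n m, (N <= n)%nat -> (N <= m)%nat ->
        sqrt (Re (hinner (hadd (u n) (hopp (u m))) (hadd (u n) (hopp (u m))))) < eps) ->
    exists l, forall eps, 0 < eps -> exists N, forall n, (N <= n)%nat ->
        sqrt (Re (hinner (hadd (u n) (hopp l)) (hadd (u n) (hopp l)))) < eps;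
  hseparable : exists d : nat -> hcar, forall x eps, 0 < eps -> exists n,
        sqrt (Re (hinner (hadd x (hopp (d n))) (hadd x (hopp (d n))))) < eps
}.

Arguments hzero {c}.
Arguments hadd {c}.
Arguments hopp {c}.
Arguments hscal {c}.
Arguments hinner {c}.

Section Ops.
Variable H : ComplexHilbertSpace.

Definition hsub (x y : H) : H := hadd x (hopp y).
Definition hnorm (x : H) : R := sqrt (Re (hinner x x)).

Definition hconverges (u : nat -> H) (l : H) : Prop :=
  forall eps, 0 < eps -> exists N, forall n, (N <= n)%nat -> hnorm (hsub (u n) l) < eps.

(** A (possibly unbounded) operator is a domain predicate [D] together with
    a map [Z] whose values matter only on [D]. *)
Definition is_linear_operator (D : H -> Prop) (Z : H -> H) : Prop :=
  D hzero /\
  (forall x y, D x -> D y -> D (hadd x y) /\ Z (hadd x y) = hadd (Z x) (Z y)) /\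
  (forall a x, D x -> D (hscal a x) /\ Z (hscal a x) = hscal a (Z x)).

Definition densely_defined (D : H -> Prop) : Prop :=
  forall x eps, 0 < eps -> exists y, D y /\ hnorm (hsub x y) < eps.

Definition closed_operator (D : H -> Prop) (Z : H -> H) : Prop :=
  forall (u : nat -> H) (x y : H),
    (forall n, D (u n)) -> hconverges u x -> hconverges (fun n => Z (u n)) y ->
    D x /\ Z x = y.

Definition adjoint_graph (D : H -> Prop) (Z : H -> H) (g h : H) : Prop :=
  forall f, D f -> hinner (Z f) g = hinner f h.

Definition adjoint_domain (D : H -> Prop) (Z : H -> H) (g : H) : Prop :=
  exists h, adjoint_graph D Z g h.

Definition numerical_range (D : H -> Prop) (Z : H -> H) (z : Cplx) : Prop :=
  exists f, D f /\ hnorm f = 1 /\ hinner (Z f) f = z.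

Definition is_eigenvalue (D : H -> Prop) (Z : H -> H) (lam : Cplx) : Prop :=
  exists f, D f /\ f <> hzero /\ Z f = hscal lam f.

Definition boundary_eigenvalue (D : H -> Prop) (Z : H -> H) (lam : Cplx) : Prop :=
  is_eigenvalue D Z lam /\ boundaryC (numerical_range D Z) lam.

Definition ker_Z (D : H -> Prop) (Z : H -> H) (lam : Cplx) (f : H) : Prop :=
  D f /\ Z f = hscal lam f.

Definition ker_Zadj (D : H -> Prop) (Z : H -> H) (lam : Cplx) (f : H) : Prop :=
  adjoint_graph D Z f (hscal (Cconj lam) f).

End Ops.

From Pilot Require Import Defs.
From Stdlib Require Import Reals Lra Psatz Classical.
Open Scope R_scope.

(* Let B be a sesquilinear form on a subspace D, lam a point that is
   approached by points outside the numerical range {B h h : h in D, |h| = 1},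
   and f in D with B f h = lam <f,h> for all h in D.  Split any g in D as
   g = k f + g' with g' orthogonal to f.  If B g' f were nonzero, then for
   every w near lam one can solve a quadratic equation for a scalar e such that
   h = f + e g' satisfies B h h = w <h,h>; so a whole disc around lam would lie
   in the numerical range, which is impossible.  Hence B g f = lam <g,f>. *)

Lemma Ceq (z w : Cplx) : Re z = Re w -> Im z = Im w -> z = w.
Proof. destruct z, w; simpl; intros; subst; reflexivity. Qed.

Definition Cnorm2 (z : Cplx) : R := Re z * Re z + Im z * Im z.

Ltac cunf :=
  unfold Cnorm2, Cadd, Csub, Copp, Cmul, Cconj, RtoC, C0, Defs.C1, Cmod, Re, Im in *;
  simpl in *; unfold Re, Im in *.
Ltac cring := apply Ceq; cunf; ring.

Lemma Cnorm2_nonneg (z : Cplx) : 0 <= Cnorm2 z.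
Proof. cunf; nra. Qed.

Lemma Cnorm2_pos (z : Cplx) : z <> C0 -> 0 < Cnorm2 z.
Proof.
  destruct z as [z1 z2]; intro Hz; cunf.
  destruct (Req_dec z1 0), (Req_dec z2 0); [subst; now exfalso | nra ..].
Qed.

Lemma Cmod_lt_Cnorm2 (z : Cplx) (d : R) : Cmod z < d -> Cnorm2 z < d * d.
Proof.
  unfold Cmod; fold (Cnorm2 z); intro Hz.
  pose proof (Cnorm2_nonneg z) as Hz0.
  pose proof (sqrt_sqrt _ Hz0); pose proof (sqrt_pos (Cnorm2 z)); nra.
Qed.

Lemma Cnorm2_mul (z w : Cplx) : Cnorm2 (Cmul z w) = Cnorm2 z * Cnorm2 w.
Proof. cunf; ring. Qed.

Lemma Cnorm2_conj (z : Cplx) : Cnorm2 (Cconj z) = Cnorm2 z.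
Proof. cunf; ring. Qed.

Lemma Cnorm2_RtoC (x : R) : Cnorm2 (RtoC x) = x * x.
Proof. cunf; ring. Qed.

(* The modulus equation behind [quadratic_solvable]: some rho >= 0 satisfies
   |z - rho E|^2 = rho |a|^2, a real quadratic in rho whose discriminant is
   nonnegative because |<z,E>| <= |z||E| <= |a|^2/4. *)
Lemma modulus_fixed_point (a z E : Cplx) :
  0 < Cnorm2 a -> 16 * (Cnorm2 z * Cnorm2 E) <= Cnorm2 a * Cnorm2 a ->
  exists rho, 0 <= rho /\ Cnorm2 (Csub z (Cmul (RtoC rho) E)) = rho * Cnorm2 a.
Proof.
  destruct a as [a1 a2], z as [z1 z2], E as [e1 e2]; cunf.
  set (b := a1*a1+a2*a2); set (Z := z1*z1+z2*z2); set (K := e1*e1+e2*e2).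
  intros Hb HZK.
  set (P := z1*e1+z2*e2).
  assert (HP : P*P <= Z*K) by (unfold P, Z, K; pose proof (pow2_ge_0 (z1*e2-z2*e1)); nra).
  assert (HZ : 0 <= Z) by (unfold Z; nra).
  assert (HK : 0 <= K) by (unfold K; nra).
  assert (HPb : -(b/4) <= P <= b/4).
  { assert (16*(P*P) <= b*b) by nra.
    destruct (Rle_dec P (b/4)), (Rle_dec (-(b/4)) P); split; nra. }
  (* rho is the smaller root of K rho^2 - B rho + Z = 0, written as 2Z/(B+S). *)
  set (B := 2*P + b).
  assert (Hdisc : 0 <= B*B - 4*K*Z) by (unfold B; nra).
  set (S := sqrt (B*B - 4*K*Z)).
  assert (HS : S*S = B*B - 4*K*Z) by (apply sqrt_sqrt; lra).
  assert (HS0 : 0 <= S) by apply sqrt_pos.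
  assert (HBS : 0 < B + S) by (unfold B; lra).
  exists (2*Z/(B+S)); split.
  - apply Rmult_le_pos; [lra | left; now apply Rinv_0_lt_compat].
  - set (rho := 2*Z/(B+S)).
    assert (Hr : rho*(B+S) = 2*Z) by (unfold rho; field; lra).
    assert (Hq : (K*rho*rho - B*rho + Z)*((B+S)*(B+S)) = 0).
    { replace ((K*rho*rho - B*rho + Z)*((B+S)*(B+S))) with
        (K*(rho*(B+S))*(rho*(B+S)) - B*(B+S)*(rho*(B+S)) + Z*((B+S)*(B+S))) by ring.
      rewrite Hr; nra. }
    apply Rmult_integral in Hq; destruct Hq as [Hq | Hq]; [| nra].
    match goal with |- ?l = ?r => assert (l - r = K*rho*rho - B*rho + Z) end.
    { unfold B, P, K, Z, b; ring. }
    lra.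
Qed.

(* The equation  e a + |e|^2 E = z  is solvable when z and E are small
   compared to a: take e = (z - rho E)/a with rho the fixed point above. *)
Lemma quadratic_solvable (a z E : Cplx) :
  0 < Cnorm2 a -> 16 * (Cnorm2 z * Cnorm2 E) <= Cnorm2 a * Cnorm2 a ->
  exists e, Cadd (Cmul e a) (Cmul (RtoC (Cnorm2 e)) E) = z.
Proof.
  intros Ha Hsmall.
  destruct (modulus_fixed_point a z E Ha Hsmall) as [rho [_ Hrho]].
  set (u := Csub z (Cmul (RtoC rho) E)) in Hrho.
  set (e := Cmul u (Cmul (Cconj a) (RtoC (/ Cnorm2 a)))).
  assert (Hea : Cmul e a = u).
  { unfold e; apply Ceq; cunf; field; lra. }
  assert (He : Cnorm2 e = rho).
  { unfold e; rewrite !Cnorm2_mul, Hrho, Cnorm2_conj, Cnorm2_RtoC; field; lra. }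
  exists e; rewrite Hea, He; unfold u; cring.
Qed.

Lemma affine_bound_near (C lam w : Cplx) (q : R) :
  Cnorm2 (Csub w lam) <= 1 ->
  Cnorm2 (Csub C (Cmul w (RtoC q))) <= 2 * Cnorm2 C + 4 * (q * q) * (Cnorm2 lam + 1).
Proof.
  destruct C as [c1 c2], lam as [l1 l2], w as [w1 w2]; cunf; intro Hw.
  assert (Hw' : w1*w1 + w2*w2 <= 2*(l1*l1+l2*l2) + 2).
  { pose proof (pow2_ge_0 (2*l1 - w1)); pose proof (pow2_ge_0 (2*l2 - w2)); nra. }
  assert (Hsplit : (c1 - w1*q)*(c1 - w1*q) + (c2 - w2*q)*(c2 - w2*q)
                   <= 2*(c1*c1+c2*c2) + 2*(q*q)*(w1*w1+w2*w2)).
  { pose proof (pow2_ge_0 (c1 + w1*q)); pose proof (pow2_ge_0 (c2 + w2*q)); nra. }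
  assert (Hq : 0 <= q*q) by nra.
  assert (Hqw : (q*q)*(w1*w1+w2*w2) <= (q*q)*(2*(l1*l1+l2*l2) + 2))
    by (apply Rmult_le_compat_l; assumption).
  match goal with |- ?l <= _ =>
    replace l with ((c1 - w1*q)*(c1 - w1*q) + (c2 - w2*q)*(c2 - w2*q)) by ring end.
  nra.
Qed.

(* Near lam, the equation  e a + |e|^2 (C - w q) = n (w - lam)  is solvable in e
   (for a <> 0): its right-hand side is small while C - w q stays bounded. *)
Lemma perturbed_quadratic_solvable (n q : R) (a C lam : Cplx) :
  0 <= n -> a <> C0 ->
  exists d, 0 < d /\ forall w, Cmod (Csub w lam) < d ->
    exists e, Cadd (Cmul e a) (Cmul (RtoC (Cnorm2 e)) (Csub C (Cmul w (RtoC q))))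
              = Cmul (RtoC n) (Csub w lam).
Proof.
  intros Hn Ha; apply Cnorm2_pos in Ha.
  set (b := Cnorm2 a) in *.
  set (M := 2 * Cnorm2 C + 4 * (q * q) * (Cnorm2 lam + 1)).
  assert (HM : 0 <= M).
  { unfold M; pose proof (Cnorm2_nonneg C); pose proof (Cnorm2_nonneg lam); nra. }
  set (d := b / (4 * n * (M + 1) + b)).
  assert (Hden : 0 < 4 * n * (M + 1) + b) by nra.
  assert (Hd0 : 0 < d) by (apply Rdiv_lt_0_compat; lra).
  assert (Hd : d * (4 * n * (M + 1)) + d * b = b) by (unfold d; field; lra).
  exists d; split; [exact Hd0 |].
  intros w Hw; apply Cmod_lt_Cnorm2 in Hw.
  apply quadratic_solvable; [exact Ha |].
  rewrite Cnorm2_mul, Cnorm2_RtoC.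
  pose proof (Cnorm2_nonneg (Csub w lam)).
  assert (Hd1 : d <= 1) by nra.
  pose proof (affine_bound_near C lam w q ltac:(nra)) as HK; fold M in HK.
  pose proof (Cnorm2_nonneg (Csub C (Cmul w (RtoC q)))).
  set (K := Cnorm2 (Csub C (Cmul w (RtoC q)))) in *.
  set (r := Cnorm2 (Csub w lam)) in *.
  assert (Hdn : d * (4 * n * (M + 1)) <= b) by nra.
  assert (H1 : n * n * r * K <= n * n * (d * d) * ((M + 1) * (M + 1))).
  { apply Rmult_le_compat; try nra. }
  assert (H2 : 0 <= d * (4 * n * (M + 1))) by nra.
  assert (H3 : (d * (4 * n * (M + 1))) * (d * (4 * n * (M + 1))) <= b * b)
    by (apply Rmult_le_compat; lra).
  fold b; lra.
Qed.

Lemma Cconj_involutive (z : Cplx) : Cconj (Cconj z) = z.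
Proof. cring. Qed.

(* Points outside S come arbitrarily close to z: the half of "z is a boundary
   point of S" that the argument uses. *)
Definition exterior_approaches (S : Cplx -> Prop) (z : Cplx) : Prop :=
  forall eps, 0 < eps -> exists w, ~ S w /\ Cmod (Csub w z) < eps.

Lemma boundary_exterior_approaches (S : Cplx -> Prop) (z : Cplx) :
  boundaryC S z -> exterior_approaches S z.
Proof. intros Hz eps Heps; exact (proj2 (Hz eps Heps)). Qed.

Lemma exterior_approaches_conj (S : Cplx -> Prop) (z : Cplx) :
  exterior_approaches S z -> exterior_approaches (fun w => S (Cconj w)) (Cconj z).
Proof.
  intros Hz eps Heps; destruct (Hz eps Heps) as [w [Hw Hwz]].
  exists (Cconj w); rewrite Cconj_involutive; split; [exact Hw |].
  replace (Cmod (Csub (Cconj w) (Cconj z))) with (Cmod (Csub w z)); [exact Hwz |].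
  cunf; f_equal; ring.
Qed.

Lemma exterior_approaches_mono (S T : Cplx -> Prop) (z : Cplx) :
  (forall w, S w -> T w) -> exterior_approaches T z -> exterior_approaches S z.
Proof.
  intros HST Hz eps Heps; destruct (Hz eps Heps) as [w [Hw Hwz]].
  exists w; split; [intro HS; exact (Hw (HST w HS)) | exact Hwz].
Qed.

Record subspace (H : ComplexHilbertSpace) (D : H -> Prop) : Prop := {
  subspace_add : forall x y, D x -> D y -> D (hadd x y);
  subspace_scal : forall a x, D x -> D (hscal a x)
}.

Record sesquilinear_on (H : ComplexHilbertSpace) (D : H -> Prop) (B : H -> H -> Cplx) : Prop := {
  sesq_addl : forall x y z, D x -> D y -> D z -> B (hadd x y) z = Cadd (B x z) (B y z);
  sesq_scall : forall a x z, D x -> D z -> B (hscal a x) z = Cmul a (B x z);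
  sesq_addr : forall x y z, D x -> D y -> D z -> B z (hadd x y) = Cadd (B z x) (B z y);
  sesq_scalr : forall a x z, D x -> D z -> B z (hscal a x) = Cmul (Cconj a) (B z x)
}.

Lemma sesquilinear_expand (H : ComplexHilbertSpace) (D : H -> Prop) (B : H -> H -> Cplx)
  (HD : subspace H D) (HB : sesquilinear_on H D B) (x y : H) (e : Cplx) :
  D x -> D y ->
  B (hadd x (hscal e y)) (hadd x (hscal e y)) =
  Cadd (Cadd (B x x) (Cmul e (B y x)))
       (Cadd (Cmul (Cconj e) (B x y)) (Cmul (Cmul e (Cconj e)) (B y y))).
Proof.
  destruct HD as [Dadd Dscal], HB as [Baddl Bscall Baddr Bscalr].
  intros Dx Dy; assert (Dey : D (hscal e y)) by auto.
  rewrite Baddl, !Baddr, !Bscall, !Bscalr by auto.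
  generalize (B x x) (B y x) (B x y) (B y y); intros; cring.
Qed.

Section HilbertSpace.
Variable H : ComplexHilbertSpace.

Lemma hadd_idem_zero (s : H) : s = hadd s s -> s = hzero.
Proof.
  intro E; rewrite <- (hadd_opp H s); rewrite E at 2.
  rewrite <- hadd_assoc, hadd_opp, hadd_0; reflexivity.
Qed.

Lemma hscal0 (x : H) : hscal C0 x = hzero.
Proof. apply hadd_idem_zero; rewrite <- hscal_adds; f_equal; cring. Qed.

Lemma hopp_scal (y : H) : hopp y = hscal (Copp Defs.C1) y.
Proof.
  assert (Hy : hadd y (hscal (Copp Defs.C1) y) = hzero).
  { rewrite <- (hscal_1 H y) at 1; rewrite <- hscal_adds.
    replace (Cadd Defs.C1 (Copp Defs.C1)) with C0 by cring; apply hscal0. }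
  rewrite <- (hadd_0 H (hscal _ y)), <- (hadd_opp H y), hadd_assoc,
          (hadd_comm H _ y), Hy, hadd_comm, hadd_0; reflexivity.
Qed.

Lemma hsub_zero (a b : H) : hadd a (hopp b) = hzero -> a = b.
Proof.
  intro E; rewrite <- (hadd_0 H a), <- (hadd_opp H b).
  rewrite (hadd_comm H b), hadd_assoc, E, hadd_comm, hadd_0; reflexivity.
Qed.

Lemma hinner_add_r (x y z : H) : hinner x (hadd y z) = Cadd (hinner x y) (hinner x z).
Proof.
  rewrite (hinner_conj H (hadd y z) x), hinner_add, (hinner_conj H y x), (hinner_conj H z x).
  generalize (hinner y x) (hinner z x); intros; cring.
Qed.

Lemma hinner_scal_r (a : Cplx) (x y : H) : hinner x (hscal a y) = Cmul (Cconj a) (hinner x y).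
Proof.
  rewrite (hinner_conj H (hscal a y) x), hinner_scal, (hinner_conj H y x).
  generalize (hinner y x); intros; cring.
Qed.

Lemma whole_space_subspace : subspace H (fun _ => True).
Proof. split; auto. Qed.

Lemma hinner_sesquilinear : sesquilinear_on H (fun _ => True) hinner.
Proof.
  split; intros.
  - apply hinner_add.
  - apply hinner_scal.
  - apply hinner_add_r.
  - apply hinner_scal_r.
Qed.

Lemma expand_inner (x y : H) (e : Cplx) :
  hinner (hadd x (hscal e y)) (hadd x (hscal e y)) =
  Cadd (Cadd (hinner x x) (Cmul e (hinner y x)))
       (Cadd (Cmul (Cconj e) (hinner x y)) (Cmul (Cmul e (Cconj e)) (hinner y y))).
Proof. exact (sesquilinear_expand H _ _ whole_space_subspace hinner_sesquilinear x y e I I). Qed.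

Lemma hinner_self_real (x : H) : hinner x x = RtoC (Re (hinner x x)).
Proof. apply Ceq; [reflexivity | apply (hinner_pos H x)]. Qed.

Lemma hinner_self_pos (x : H) : x <> hzero -> 0 < Re (hinner x x).
Proof.
  intro Hx; destruct (proj2 (hinner_pos H x)) as [Hpos | Hzero]; [exact Hpos |].
  exfalso; apply Hx, hinner_def; rewrite hinner_self_real, <- Hzero; reflexivity.
Qed.

(* A vector orthogonal to a dense set vanishes: otherwise no element of the
   set could approximate it better than its own norm. *)
Lemma orthogonal_to_dense_zero (D : H -> Prop) (v : H) :
  densely_defined H D -> (forall g, D g -> hinner v g = C0) -> v = hzero.
Proof.
  intros Hdense Horth; apply NNPP; intro Hv.
  pose proof (hinner_self_pos v Hv) as Hvv.
  destruct (Hdense v _ (sqrt_lt_R0 _ Hvv)) as [y [Dy Hy]].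
  unfold hnorm, hsub in Hy; rewrite hopp_scal, expand_inner in Hy.
  rewrite (hinner_conj H v y), (Horth y Dy) in Hy.
  apply sqrt_lt_0_alt in Hy.
  pose proof (proj2 (hinner_pos H y)) as Hyy.
  revert Hy Hyy; generalize (hinner v v) (hinner y y); intros c d Hy Hyy.
  cunf; nra.
Qed.

End HilbertSpace.

Section BoundaryForm.
Variable H : ComplexHilbertSpace.
Variable D : H -> Prop.
Variable B : H -> H -> Cplx.
Hypothesis HD : subspace H D.
Hypothesis HB : sesquilinear_on H D B.

Definition form_range (w : Cplx) : Prop := exists h, D h /\ hnorm H h = 1 /\ B h h = w.

Lemma form_range_rescale (h : H) (N : R) (w : Cplx) :
  D h -> 0 < N -> hinner h h = RtoC N -> B h h = Cmul w (RtoC N) -> form_range w.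
Proof.
  intros Dh HN Hhh HBhh.
  set (s := / sqrt N).
  assert (Hs : s * s * N = 1).
  { pose proof (sqrt_sqrt N (Rlt_le _ _ HN)) as Hsq; pose proof (sqrt_lt_R0 N HN).
    unfold s; rewrite <- Hsq at 3; field; lra. }
  exists (hscal (RtoC s) h); split; [now apply subspace_scal | split].
  - unfold hnorm; rewrite hinner_scal, hinner_scal_r, Hhh.
    replace (Re (Cmul (RtoC s) (Cmul (Cconj (RtoC s)) (RtoC N)))) with (s * s * N)
      by (cunf; ring).
    rewrite Hs; apply sqrt_1.
  - rewrite (sesq_scall _ _ _ HB), (sesq_scalr _ _ _ HB), HBhh
      by (try apply subspace_scal; auto).
    transitivity (Cmul w (RtoC (s * s * N))); [cring | rewrite Hs; cring].
Qed.

(* Let f <> 0 satisfy B f h = lam <f,h> on D, and let g in D be orthogonal to f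
   with B g f <> 0.  Then every w close to lam is B h h / <h,h> for some
   h = f + e g: the numerical range contains a whole disc around lam. *)
Lemma form_range_covers_disc (lam : Cplx) (f g : H) :
  D f -> D g -> f <> hzero ->
  (forall h, D h -> B f h = Cmul lam (hinner f h)) ->
  hinner g f = C0 -> B g f <> C0 ->
  exists d, 0 < d /\ forall w, Cmod (Csub w lam) < d -> form_range w.
Proof.
  intros Df Dg Hf0 Hf Hgf Ha.
  set (n := Re (hinner f f)); set (q := Re (hinner g g)).
  assert (Hn : 0 < n) by (now apply hinner_self_pos).
  assert (Hq : 0 <= q) by apply (hinner_pos H g).
  assert (Hff : hinner f f = RtoC n) by apply hinner_self_real.
  assert (Hgg : hinner g g = RtoC q) by apply hinner_self_real.
  assert (Hfg : hinner f g = C0) by (rewrite hinner_conj, Hgf; cring).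
  assert (HBff : B f f = Cmul lam (RtoC n)) by (rewrite Hf, Hff; auto).
  assert (HBfg : B f g = C0) by (rewrite Hf, Hfg by auto; cring).
  destruct (perturbed_quadratic_solvable n q (B g f) (B g g) lam (Rlt_le _ _ Hn) Ha)
    as [d [Hd Hsolve]].
  exists d; split; [exact Hd |]; intros w Hw.
  destruct (Hsolve w Hw) as [e He].
  set (h := hadd f (hscal e g)).
  set (N := n + Cnorm2 e * q).
  assert (Dh : D h) by (apply subspace_add, subspace_scal; auto).
  assert (HN : 0 < N) by (pose proof (Cnorm2_nonneg e); unfold N; nra).
  assert (Hhh : hinner h h = RtoC N).
  { unfold h; rewrite expand_inner, Hff, Hfg, Hgf, Hgg; unfold N; cring. }
  assert (HBhh : B h h = Cmul w (RtoC N)).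
  { unfold h; rewrite (sesquilinear_expand H D B HD HB) by auto.
    rewrite HBff, HBfg.
    transitivity
      (Cadd (Cadd (Cmul lam (RtoC n)) (Cmul (RtoC (Cnorm2 e)) (Cmul w (RtoC q))))
            (Cadd (Cmul e (B g f))
                  (Cmul (RtoC (Cnorm2 e)) (Csub (B g g) (Cmul w (RtoC q))))));
      [cring | rewrite He; unfold N; cring]. }
  exact (form_range_rescale h N w Dh HN Hhh HBhh).
Qed.

(* Orthogonalise g against f; a nonzero value of
   B on the orthogonal part would put a disc around lam inside the range. *)
Lemma boundary_eigenvector_transpose (lam : Cplx) (f : H) :
  exterior_approaches form_range lam -> D f ->
  (forall h, D h -> B f h = Cmul lam (hinner f h)) ->
  forall g, D g -> B g f = Cmul lam (hinner g f).
Proof.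
  intros Hext Df Hf g Dg.
  destruct (classic (f = hzero)) as [Hf0 | Hf0].
  { subst f; rewrite <- (hscal0 H hzero), (sesq_scalr _ _ _ HB), hinner_scal_r by auto.
    generalize (B g hzero) (hinner g hzero); intros; cring. }
  set (n := Re (hinner f f)).
  assert (Hn : 0 < n) by (now apply hinner_self_pos).
  assert (Hff : hinner f f = RtoC n) by apply hinner_self_real.
  set (k := Cmul (hinner g f) (RtoC (/ n))).
  set (g' := hadd g (hscal (Copp k) f)).
  assert (Dg' : D g') by (apply subspace_add, subspace_scal; auto).
  assert (Hg'f : hinner g' f = C0).
  { unfold g', k; rewrite hinner_add, hinner_scal, Hff.
    apply Ceq; cunf; field; lra. }
  assert (HBg'f : B g' f = Cadd (B g f) (Cmul (Copp k) (Cmul lam (RtoC n)))).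
  { unfold g'; rewrite (sesq_addl _ _ _ HB), (sesq_scall _ _ _ HB), Hf, Hff
      by (try apply subspace_scal; auto); reflexivity. }
  assert (Hzero : B g' f = C0).
  { apply NNPP; intro Ha.
    destruct (form_range_covers_disc lam f g' Df Dg' Hf0 Hf Hg'f Ha) as [d [Hd Hdisc]].
    destruct (Hext d Hd) as [w [Hw Hwd]].
    exact (Hw (Hdisc w Hwd)). }
  rewrite Hzero in HBg'f.
  transitivity (Cmul k (Cmul lam (RtoC n))).
  - transitivity (Cadd (Cadd (B g f) (Cmul (Copp k) (Cmul lam (RtoC n))))
                        (Cmul k (Cmul lam (RtoC n))));
      [cring | rewrite <- HBg'f; cring].
  - unfold k; apply Ceq; cunf; field; lra.
Qed.

End BoundaryForm.

Section Operator.
Variable H : ComplexHilbertSpace.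
Variable D : H -> Prop.
Variable Z : H -> H.
Hypothesis Hlin : is_linear_operator H D Z.

Lemma operator_domain_subspace : subspace H D.
Proof.
  destruct Hlin as [_ [Hadd Hscal]]; split.
  - intros x y Dx Dy; exact (proj1 (Hadd x y Dx Dy)).
  - intros a x Dx; exact (proj1 (Hscal a x Dx)).
Qed.

(* (x, y) |-> <Z x, y>, whose numerical range is that of Z. *)
Lemma operator_form_sesquilinear : sesquilinear_on H D (fun x y => hinner (Z x) y).
Proof.
  destruct Hlin as [_ [Hadd Hscal]]; split; intros.
  - destruct (Hadd x y) as [_ ->]; auto; apply hinner_add.
  - destruct (Hscal a x) as [_ ->]; auto; apply hinner_scal.
  - apply hinner_add_r.
  - apply hinner_scal_r.
Qed.

(* (x, y) |-> <x, Z y>, whose numerical range is the conjugate of that of Z. *)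
Lemma adjoint_form_sesquilinear : sesquilinear_on H D (fun x y => Cconj (hinner (Z y) x)).
Proof.
  destruct Hlin as [_ [Hadd Hscal]]; split; intros.
  - rewrite hinner_add_r; generalize (hinner (Z z) x) (hinner (Z z) y); intros; cring.
  - rewrite hinner_scal_r; generalize (hinner (Z z) x); intros; cring.
  - destruct (Hadd x y) as [_ ->]; auto; rewrite hinner_add.
    generalize (hinner (Z x) z) (hinner (Z y) z); intros; cring.
  - destruct (Hscal a x) as [_ ->]; auto; rewrite hinner_scal.
    generalize (hinner (Z x) z); intros; cring.
Qed.

Lemma ker_Z_sub_ker_Zadj (lam : Cplx) (f : H) :
  exterior_approaches (numerical_range H D Z) lam ->
  ker_Z H D Z lam f -> ker_Zadj H D Z lam f.
Proof.
  intros Hext [Df Zf] g Dg.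
  rewrite hinner_scal_r, Cconj_involutive.
  apply (boundary_eigenvector_transpose H D (fun x y => hinner (Z x) y)
           operator_domain_subspace operator_form_sesquilinear lam f Hext Df); auto.
  intros h Dh; rewrite Zf; apply hinner_scal.
Qed.

(* The form <x, Z y> has conj lam on the boundary of its range, so the first
   assertion's argument gives <Z f - lam f, g> = 0 for g in the dense set D. *)
Lemma ker_Zadj_sub_ker_Z (lam : Cplx) (f : H) :
  densely_defined H D ->
  exterior_approaches (numerical_range H D Z) lam ->
  (forall g, adjoint_domain H D Z g -> D g) ->
  ker_Zadj H D Z lam f -> ker_Z H D Z lam f.
Proof.
  intros Hdense Hext Hdom Hf.
  assert (Df : D f) by (apply Hdom; exists (hscal (Cconj lam) f); exact Hf).
  split; [exact Df |].
  set (Badj := fun x y => Cconj (hinner (Z y) x)).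
  assert (Hext' : exterior_approaches (form_range H D Badj) (Cconj lam)).
  { apply (exterior_approaches_mono _ (fun w => numerical_range H D Z (Cconj w)));
      [| exact (exterior_approaches_conj _ _ Hext)].
    intros w [h [Dh [Hh Hw]]]; exists h; repeat split; auto.
    unfold Badj in Hw; rewrite <- Hw, Cconj_involutive; reflexivity. }
  assert (Htransp : forall g, D g -> Badj g f = Cmul (Cconj lam) (hinner g f)).
  { apply (boundary_eigenvector_transpose H D Badj operator_domain_subspace
             adjoint_form_sesquilinear (Cconj lam) f Hext' Df).
    intros h Dh; unfold Badj; rewrite (Hf h Dh), hinner_scal_r, (hinner_conj H h f).
    generalize (hinner h f); intros; cring. }
  apply hsub_zero, (orthogonal_to_dense_zero H D _ Hdense); intros g Dg.
  pose proof (Htransp g Dg) as Hg; unfold Badj in Hg.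
  rewrite hopp_scal, hinner_add, !hinner_scal, <- (Cconj_involutive (hinner (Z f) g)), Hg,
          (hinner_conj H g f).
  generalize (hinner f g); intros; cring.
Qed.

End Operator.

Theorem mainTheorem1 (H : ComplexHilbertSpace) (D : H -> Prop) (Z : H -> H) (lam : Cplx)
  (Hlin : is_linear_operator H D Z)
  (Hdense : densely_defined H D)
  (Hclosed : closed_operator H D Z)
  (Hdom : forall f, D f -> adjoint_domain H D Z f)
  (Hbd : boundary_eigenvalue H D Z lam) :
  (forall f, ker_Z H D Z lam f -> ker_Zadj H D Z lam f) /\
  ((forall g, adjoint_domain H D Z g -> D g) ->
     forall f, ker_Z H D Z lam f <-> ker_Zadj H D Z lam f).
Proof.
  destruct Hbd as [_ Hboundary].
  pose proof (boundary_exterior_approaches _ _ Hboundary) as Hext.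
  split.
  - intro f; exact (ker_Z_sub_ker_Zadj H D Z Hlin lam f Hext).
  - intros Hdom_adj f; split.
    + exact (ker_Z_sub_ker_Zadj H D Z Hlin lam f Hext).
    + exact (ker_Zadj_sub_ker_Z H D Z Hlin lam f Hdense Hext Hdom_adj).
Qed.
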